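(* Let $m \ge 1$ and let $TW_{m+2}'$ be the commutator subgroup of the twin group $TW_{m+2}$. Then $TW_{m+2}'$ has the following presentation. Generators: $\beta_p(j)$ for all integers $0 \le p < j \le m$. Defining relations: for all integers $j,k,t,l$ with $1 \le k \le j$, $j+2 \le t \le m$ and $3 \le l \le t-j$, $$\beta_{j-k}(j)\,\beta_{t-(j+l)}(t) = \beta_{t-(j+l)}(t)\,\beta_{j-k}(j),$$ and for all integers $j,k,t$ with $1 \le k \le j$ and $j+2 \le t \le m$, $$\beta_{t-k}(t) = \beta_{j-k}(j)^{-1}\,\beta_{t-(j+1)}(t)\,\beta_{j-k}(j).$$ Here the abstract generator $\beta_p(j)$ corresponds to the element of $TW_{m+2}$ defined in the context.
   Context: For $n \ge 2$, the twin group $TW_n$ is the group with generators $\tau_1,\dots,\tau_{n-1}$ and defining relations $\tau_i^2=1$ for all $i$, and $\tau_i\tau_j=\tau_j\tau_i$ whenever $|i-j|>1$. (For $m\ge1$, $TW_{m+2}$ is isomorphic to Grothendieck's $m$-dimensional cartographical group.) $G'$ denotes the commutator subgroup of a group $G$. For $1 \le j \le n-2$ and $0 \le p < j$, define the element $$\beta_p(j) := \tau_{j-p}\tau_{j-p+1}\cdots\tau_{j-1}\,(\tau_{j+1}\tau_j\tau_{j+1}\tau_j)\,\tau_{j-1}\cdots\tau_{j-p+1}\tau_{j-p} \in TW_n,$$ so that $\beta_0(j)=\tau_{j+1}\tau_j\tau_{j+1}\tau_j$. *)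

From mathcomp Require Import all_boot.
Set Implicit Arguments. Unset Strict Implicit. Unset Printing Implicit Defensive.

(* A word over the alphabet A: letters (x, false) = x, (x, true) = x^-1. *)
Definition word (A : Type) := seq (A * bool).

Definition winv (A : Type) (w : word A) : word A :=
  rev (map (fun x => (x.1, ~~ x.2)) w).

Inductive wrel (A : Type) (R : word A -> word A -> Prop) : word A -> word A -> Prop :=
| wrel_refl w : wrel R w w
| wrel_sym u v : wrel R u v -> wrel R v u
| wrel_trans u v w : wrel R u v -> wrel R v w -> wrel R u w
| wrel_ctx l u v r : wrel R u v -> wrel R (l ++ u ++ r) (l ++ v ++ r)
| wrel_red x b : wrel R [:: (x, b); (x, ~~ b)] [::]
| wrel_rel u v : R u v -> wrel R u v.

(* Twin group TW_{m+2}: generator i : 'I_m.+1 stands for tau_(i+1),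
   i.e. tau_1, ..., tau_(m+1). *)
Definition TWrel (m : nat) (u v : word 'I_m.+1) : Prop :=
  (exists i : 'I_m.+1, u = [:: (i, false); (i, false)] /\ v = [::]) \/
  (exists i j : 'I_m.+1, (i.+1 < j \/ j.+1 < i) /\
     u = [:: (i, false); (j, false)] /\ v = [:: (j, false); (i, false)]).

Definition wcomm (A : Type) (g h : word A) : word A :=
  winv g ++ winv h ++ g ++ h.

Definition in_commTW (m : nat) (w : word 'I_m.+1) : Prop :=
  exists cs : seq (word 'I_m.+1 * word 'I_m.+1),
    wrel (@TWrel m) w (flatten [seq wcomm c.1 c.2 | c <- cs]).

Definition tau (m i : nat) : word 'I_m.+1 := [:: (inord i.-1, false)].

(* beta_p(j) = tau_{j-p} ... tau_{j-1} (tau_{j+1} tau_j tau_{j+1} tau_j)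
               tau_{j-1} ... tau_{j-p} *)
Definition beta (m p j : nat) : word 'I_m.+1 :=
  flatten [seq tau m (j - p + k) | k <- iota 0 p] ++
  tau m j.+1 ++ tau m j ++ tau m j.+1 ++ tau m j ++
  flatten [seq tau m (j - 1 - k) | k <- iota 0 p].

(* Abstract generators beta_p(j), 0 <= p < j <= m. *)
Definition Bgen (m : nat) := {x : nat * nat | (x.1 < x.2) && (x.2 <= m)}.

Definition wval (m : nat) (u : word (Bgen m)) : seq ((nat * nat) * bool) :=
  map (fun x => (val x.1, x.2)) u.

Definition Prel (m : nat) (u v : word (Bgen m)) : Prop :=
  (exists j k t l, [/\ 1 <= k <= j, j + 2 <= t <= m & 3 <= l <= t - j] /\
     wval u = [:: ((j - k, j), false); ((t - (j + l), t), false)] /\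
     wval v = [:: ((t - (j + l), t), false); ((j - k, j), false)]) \/
  (exists j k t, [/\ 1 <= k <= j & j + 2 <= t <= m] /\
     wval u = [:: ((t - k, t), false)] /\
     wval v = [:: ((j - k, j), true); ((t - (j + 1), t), false);
                  ((j - k, j), false)]).

Definition phi (m : nat) (u : word (Bgen m)) : word 'I_m.+1 :=
  flatten [seq (if x.2 then winv (beta m (val x.1).1 (val x.1).2)
                else beta m (val x.1).1 (val x.1).2) | x <- u].

From mathcomp Require Import all_boot zify.
From Stdlib Require Import FunctionalExtensionality Setoid Morphisms.
Set Implicit Arguments. Unset Strict Implicit. Unset Printing Implicit Defensive.

(* TW_{m+2} abelianises to (Z/2)^{m+1}, so TW_{m+2}' is the kernel of the parity
   map and a coset of it is the set S of indices k for which tau_k occurs an odd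
   number of times; the increasing product of the tau_k, k in S, represents it.
   With these representatives the Reidemeister-Schreier process rewrites a word
   read from the coset S into Schreier generators: reading tau_k contributes
   beta_p(k)^(+-1) when k+1 is in S, p being the length of the run of S ending at
   k-1, and nothing otherwise.  This rewriting turns the twin relations into
   consequences of the two families of defining relations, and it sends the
   image of each beta_p(j) back to beta_p(j): hence injectivity, and every
   element of TW_{m+2}' is a product of betas.  Conversely beta_p(j) is the
   commutator of two conjugates of tau_(j+1) and tau_j. *)

#[global] Hint Resolve wrel_refl : core.

#[global] Instance wrel_Equivalence A R : Equivalence (@wrel A R).
Proof. split; [exact: wrel_refl | exact: wrel_sym | exact: wrel_trans]. Qed.

Lemma wrel_cat A R (u u' v v' : word A) :
  wrel R u u' -> wrel R v v' -> wrel R (u ++ v) (u' ++ v').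
Proof.
move=> huu' hvv'; transitivity (u' ++ v); first exact: (wrel_ctx [::] v huu').
by have := wrel_ctx u' [::] hvv'; rewrite !cats0.
Qed.

#[global] Instance cat_wrel_Proper A R :
  Proper (@wrel A R ==> @wrel A R ==> @wrel A R) (@cat _).
Proof. by move=> ? ? h ? ? h'; apply: wrel_cat. Qed.

#[global] Instance cons_wrel_Proper A R :
  Proper (eq ==> @wrel A R ==> @wrel A R) (@cons _).
Proof. by move=> a _ <- ? ? h; apply: (wrel_cat (wrel_refl R [:: a]) h). Qed.

Section WordCongruence.
Context {A : Type} {R : word A -> word A -> Prop}.
Local Notation "u ≈ v" := (wrel R u v) (at level 70).
Implicit Types u v w : word A.

Lemma winv_cat u v : winv (u ++ v) = winv v ++ winv u.
Proof. by rewrite /winv map_cat rev_cat. Qed.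

Lemma winvK : involutive (@winv A).
Proof.
move=> w; rewrite /winv map_rev revK -map_comp -[RHS]map_id.
by apply: eq_map => -[x b] /=; rewrite negbK.
Qed.

Lemma wrel_cat_winv w : w ++ winv w ≈ [::].
Proof.
elim: w => [|[x b] w IH] /=; first reflexivity.
have -> : winv ((x, b) :: w) = winv w ++ [:: (x, ~~ b)].
  by rewrite -cat1s winv_cat.
by rewrite -cat1s [w ++ _]catA IH /=; apply: wrel_red.
Qed.

Lemma wrel_winv_cat w : winv w ++ w ≈ [::].
Proof. by have := wrel_cat_winv (winv w); rewrite winvK. Qed.

Lemma wrel_winv u v : u ≈ v -> winv u ≈ winv v.
Proof.
move=> huv; transitivity (winv u ++ v ++ winv v).
  by rewrite wrel_cat_winv cats0.
by rewrite -[X in _ ++ X ++ _]huv catA wrel_winv_cat.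
Qed.

Lemma wrel_commute_winv u v : u ++ v ≈ v ++ u -> winv u ++ v ≈ v ++ winv u.
Proof.
move=> huv; transitivity (winv u ++ (v ++ u) ++ winv u).
  by rewrite -catA wrel_cat_winv cats0.
by rewrite -huv !catA wrel_winv_cat.
Qed.

Lemma wrel_commute_letters a b e d :
  [:: (a, false); (b, false)] ≈ [:: (b, false); (a, false)] ->
  [:: (a, e); (b, d)] ≈ [:: (b, d); (a, e)].
Proof.
have commute_winv u v : u ++ v ≈ v ++ u -> v ++ winv u ≈ winv u ++ v.
  by move=> /wrel_commute_winv; symmetry.
move=> ab; have ba' := commute_winv [:: (a, false)] [:: (b, false)] ab.
case: e d => [] [] //.
- exact: commute_winv [:: (b, false)] [:: (a, true)] ba'.
- by symmetry.
- by apply: commute_winv [:: (b, false)] [:: (a, false)] _; symmetry.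
Qed.

Lemma wrel_conj a c d : c ≈ winv a ++ d ++ a ->
  a ++ c ≈ d ++ a /\ winv a ++ d ≈ c ++ winv a.
Proof.
move=> hc; split.
  by rewrite hc catA wrel_cat_winv.
by rewrite hc -!catA wrel_cat_winv cats0.
Qed.

End WordCongruence.

#[global] Instance winv_wrel_Proper A R : Proper (@wrel A R ==> @wrel A R) (@winv A).
Proof. by move=> u v; apply: wrel_winv. Qed.

Definition unsign A (w : word A) : word A := [seq (a.1, false) | a <- w].

Definition beta_seq p j := iota (j - p) p ++ [:: j.+1; j; j.+1; j] ++ rev (iota (j - p) p).

Section TwinWords.
Variable m : nat.
Local Notation "u ≈ v" := (wrel (@TWrel m) u v) (at level 70).
Implicit Types u v w : word 'I_m.+1.

Definition tauL k : 'I_m.+1 * bool := (inord k.-1, false).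
Arguments tauL : simpl never.
Definition taus (s : seq nat) : word 'I_m.+1 := [seq tauL k | k <- s].
Definition tau_index k := 0 < k <= m.+1.
Definition far k l := (k.+1 < l) || (l.+1 < k).

Lemma taus_cat s t : taus (s ++ t) = taus s ++ taus t.
Proof. exact: map_cat. Qed.

Lemma taus_cons k s : taus (k :: s) = tauL k :: taus s.
Proof. by []. Qed.

Lemma val_tauL k : tau_index k -> ((tauL k).1 : nat) = k.-1.
Proof. by move=> /andP[k_gt0 k_le]; rewrite /tauL /= inordK //; lia. Qed.

Lemma tw_square x : [:: (x, false); (x, false)] ≈ [::].
Proof. by apply: wrel_rel; left; exists x. Qed.

Lemma tw_letter_inv x b : [:: (x, b)] ≈ [:: (x, false)].
Proof.
case: b => //; transitivity ([:: (x, true)] ++ [:: (x, false); (x, false)]).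
  by rewrite tw_square.
exact: (wrel_ctx [::] [:: (x, false)] (wrel_red _ x true)).
Qed.

Lemma wrel_unsign w : w ≈ unsign w.
Proof. by elim: w => [|[x b] w IH] //=; exact: (wrel_cat (tw_letter_inv x b) IH). Qed.

Lemma winv_taus s : winv (taus s) ≈ taus (rev s).
Proof. by rewrite (wrel_unsign (winv _)) /unsign /winv /taus !map_rev -!map_comp. Qed.

Lemma taus_rev_cancel s r : taus (rev s) ++ taus s ++ r ≈ r.
Proof.
by rewrite -(winv_taus s) catA wrel_winv_cat.
Qed.

Lemma tauL_square k r : tauL k :: tauL k :: r ≈ r.
Proof. exact: (wrel_cat (tw_square _) (wrel_refl _ r)). Qed.

Lemma tw_swap (x y : 'I_m.+1) b c : far x y -> [:: (x, b); (y, c)] ≈ [:: (y, c); (x, b)].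
Proof.
move=> xy_far; rewrite -cat1s !tw_letter_inv -[[:: (y, c); _]]cat1s !tw_letter_inv.
by apply: wrel_rel; right; exists x, y; split => //; apply/orP.
Qed.

Lemma wrel_far_commute u v :
  all (fun a : 'I_m.+1 * bool => all (fun b : 'I_m.+1 * bool => far a.1 b.1) v) u ->
  u ++ v ≈ v ++ u.
Proof.
have letter_commute (a : 'I_m.+1 * bool) v' :
    all (fun b : 'I_m.+1 * bool => far a.1 b.1) v' -> a :: v' ≈ v' ++ [:: a].
  elim: v' => [|b v' IH] //= /andP[ab_far /IH {}IH].
  transitivity (b :: a :: v'); last by rewrite IH.
  case: a b ab_far {IH} => x e [y d] /(tw_swap e d) hswap.
  exact: (wrel_cat hswap (wrel_refl _ v')).
elim: u => [|a u IH] /=; first by rewrite cats0.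
case/andP=> /letter_commute a_v /IH u_v.
by rewrite u_v -cat_cons a_v -catA.
Qed.

Lemma taus_far_commute s t r : all tau_index s -> all tau_index t ->
  all (fun k => all (far k) t) s -> taus s ++ taus t ++ r ≈ taus t ++ taus s ++ r.
Proof.
move=> s_idx t_idx st_far; rewrite !catA (wrel_far_commute (u := taus s)) //.
rewrite all_map; apply/allP=> k ks /=; rewrite all_map; apply/allP=> l lt /=.
rewrite !val_tauL ?(allP s_idx _ ks) ?(allP t_idx _ lt) //.
move: (allP (allP st_far _ ks) _ lt) (allP s_idx _ ks) (allP t_idx _ lt).
rewrite /far /tau_index; lia.
Qed.

Lemma tauL_far_commute k s r : tau_index k -> all tau_index s -> all (far k) s ->
  tauL k :: taus s ++ r ≈ taus s ++ tauL k :: r.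
Proof.
move=> k_idx s_idx ks_far.
by have := @taus_far_commute [:: k] s r; rewrite /= k_idx ks_far andbT; apply.
Qed.

Lemma beta_taus p j : p <= j -> beta m p j = taus (beta_seq p j).
Proof.
move=> p_le_j; have flatten_tau (f : nat -> nat) s :
    flatten [seq tau m (f k) | k <- s] = taus [seq f k | k <- s].
  by elim: s => //= k s ->.
have up_iota : [seq j - p + k | k <- iota 0 p] = iota (j - p) p.
  by rewrite -{2}[j - p]addn0 iotaDl.
have down_iota n : n <= j -> [seq j - 1 - k | k <- iota 0 n] = rev (iota (j - n) n).
  elim: n => [//|n IH] n_le_j.
  rewrite -[n.+1]addn1 iotaD map_cat IH; last lia.
  have -> : j - (n + 1) = (j - n).-1 by lia.
  have -> : iota (j - n).-1 (n + 1) = (j - n).-1 :: iota (j - n) n.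
    by rewrite addn1 /=; congr (_ :: iota _ _); lia.
  by rewrite rev_cons cats1 /=; congr (rcons _ _); lia.
by rewrite /beta !flatten_tau up_iota down_iota // !taus_cat.
Qed.

End TwinWords.

Definition mem_simpl := (mem_cat, mem_rev, mem_iota, mem_filter, inE).
Ltac index_arith :=
  repeat (first [apply/allP => ?; rewrite /= ?mem_simpl => ? | apply/andP; split]);
  rewrite /tau_index /far; lia.

Lemma beta_seq_conj_split j k t : 1 <= k <= j -> j.+2 <= t ->
  let Q := iota k (j - k) in let E := beta_seq (t - j.+2) t in
  [/\ beta_seq (t - k) t = Q ++ [:: j; j.+1] ++ E ++ [:: j.+1; j] ++ rev Q,
      beta_seq (t - (j + 1)) t = j.+1 :: E ++ [:: j.+1] &
      beta_seq (j - k) j = Q ++ [:: j.+1; j; j.+1; j] ++ rev Q].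
Proof.
move=> hk ht Q E; rewrite /E /beta_seq.
have -> : t - (t - j.+2) = j.+2 by lia.
have -> : j - (j - k) = k by lia.
have -> : t - (t - (j + 1)) = j.+1 by lia.
have iota_j1 : iota j.+1 (t - (j + 1)) = j.+1 :: iota j.+2 (t - j.+2).
  by rewrite (_ : t - (j + 1) = (t - j.+2).+1) //; lia.
split => //; last by rewrite iota_j1 /= rev_cons -cats1 -!catA.
have -> : t - (t - k) = k by lia.
have -> : t - k = (j - k) + (t - j.+2).+2 by lia.
rewrite iotaD (_ : k + (j - k) = j) /=; last lia.
by rewrite rev_cat /= -!catA !rev_cons -!cats1 -!catA.
Qed.

Section PresentationRelations.
Variable m : nat.
Local Notation "u ≈ v" := (wrel (@TWrel m) u v) (at level 70).
Local Notation taus := (taus m).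
Local Notation tauL := (tauL m).

Definition phi_labels (s : seq ((nat * nat) * bool)) : word 'I_m.+1 :=
  flatten [seq (if x.2 then winv (beta m x.1.1 x.1.2) else beta m x.1.1 x.1.2) | x <- s].

Lemma phiE (u : word (Bgen m)) : phi u = phi_labels (wval u).
Proof. by rewrite /phi /phi_labels /wval -map_comp. Qed.

Lemma phi_cat (u v : word (Bgen m)) : phi (u ++ v) = phi u ++ phi v.
Proof. by rewrite /phi map_cat flatten_cat. Qed.

Lemma beta_far_commute p j q t : p < j -> q < t <= m -> j.+3 <= t - q ->
  beta m p j ++ beta m q t ≈ beta m q t ++ beta m p j.
Proof.
move=> p_lt_j q_lt_t gap; rewrite !beta_taus; try lia.
have := @taus_far_commute m (beta_seq p j) (beta_seq q t) [::]; rewrite !cats0.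
by apply; rewrite /beta_seq; index_arith.
Qed.

Lemma taus_conj_far j Q E : 0 < j <= m ->
  all (fun q => 0 < q < j) Q -> all (fun e => j.+2 <= e <= m.+1) E ->
  let B := taus (Q ++ [:: j.+1; j; j.+1; j] ++ rev Q) in
  taus (Q ++ [:: j; j.+1] ++ E ++ [:: j.+1; j] ++ rev Q) ≈
  winv B ++ taus (j.+1 :: E ++ [:: j.+1]) ++ B.
Proof.
move=> j_range /allP Q_lt /allP E_gt B.
have Q_idx : all (tau_index m) (rev Q).
  by apply/allP => q; rewrite mem_rev => /Q_lt; rewrite /tau_index; lia.
have E_idx : all (tau_index m) E by apply/allP => e /E_gt; rewrite /tau_index; lia.
have E_far : all (far j) E by apply/allP => e /E_gt; rewrite /far; lia.
have Q_far : all (fun q => all (far q) (j.+1 :: E ++ [:: j.+1])) (rev Q).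
  apply/allP => q; rewrite mem_rev => /Q_lt q_lt; apply/allP => e.
  by rewrite !mem_simpl => /or3P[/eqP->|/E_gt|/eqP->]; rewrite /far; lia.
have D_idx : all (tau_index m) (j.+1 :: E ++ [:: j.+1]).
  by rewrite /= all_cat E_idx /= /tau_index; lia.
move: D_idx Q_far; move Dq: (j.+1 :: E ++ [:: j.+1]) => D D_idx Q_far.
rewrite /B winv_taus !rev_cat revK !taus_cat -!catA.
rewrite (taus_far_commute _ Q_idx D_idx Q_far) taus_rev_cancel -Dq /= !taus_cat -!catA /=.
have j_idx : tau_index m j by rewrite /tau_index; lia.
by rewrite !tauL_square (tauL_far_commute _ j_idx E_idx E_far) tauL_square.
Qed.

Lemma beta_conj j k t : 1 <= k <= j -> j.+2 <= t <= m ->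
  beta m (t - k) t ≈ winv (beta m (j - k) j) ++ beta m (t - (j + 1)) t ++ beta m (j - k) j.
Proof.
move=> hk ht; rewrite !beta_taus; try lia.
have [-> -> ->] := beta_seq_conj_split hk (proj1 (andP ht)).
apply: taus_conj_far; first lia.
  by apply/allP => q; rewrite mem_iota; lia.
by rewrite /beta_seq; index_arith.
Qed.

Lemma phi_Prel (u v : word (Bgen m)) : Prel u v -> phi u ≈ phi v.
Proof.
case=> [[j [k [t [l [[? ? ?] [hu hv]]]]]] | [j [k [t [[? ?] [hu hv]]]]]];
  rewrite !phiE hu hv /phi_labels /= ?cats0.
- by apply: beta_far_commute; lia.
- by apply: beta_conj; lia.
Qed.

Lemma phi_wrel (u v : word (Bgen m)) : wrel (@Prel m) u v -> phi u ≈ phi v.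
Proof.
elim=> {u v} [w | u v _ IH | u v w _ IHuv _ IHvw | l u v r _ IH | x [] | u v /phi_Prel] //.
- by symmetry.
- by rewrite IHuv.
- by rewrite !phi_cat IH.
- by rewrite /phi /= cats0 wrel_winv_cat.
- by rewrite /phi /= cats0 wrel_cat_winv.
Qed.

End PresentationRelations.

Definition toggle (S : nat -> bool) i : nat -> bool := fun k => (k == i) (+) S k.

Fixpoint runlen (S : nat -> bool) n :=
  if n is n'.+1 then (if S n then (runlen S n').+1 else 0) else 0.

Lemma toggleK S i : toggle (toggle S i) i = S.
Proof. by apply: functional_extensionality => k; rewrite /toggle addbA addbb. Qed.

Lemma toggleC S i j : toggle (toggle S i) j = toggle (toggle S j) i.
Proof.
by apply: functional_extensionality => k; rewrite /toggle addbA (addbC (k == j)) -addbA.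
Qed.

Lemma toggle_neq S i k : k != i -> toggle S i k = S k.
Proof. by rewrite /toggle => /negbTE ->. Qed.

Lemma toggle_eq S i : toggle S i i = ~~ S i.
Proof. by rewrite /toggle eqxx. Qed.

Lemma eq_runlen S S' n : (forall k, k <= n -> S k = S' k) -> runlen S n = runlen S' n.
Proof. by elim: n => [//|n IH] eqS /=; rewrite eqS // IH // => k hk; apply: eqS; lia. Qed.

Lemma runlen_le S n : runlen S n <= n.
Proof. by elim: n => [//|n IH] /=; case: (S n.+1) => //; lia. Qed.

Lemma eq_runlen_above S S' k n : S k = false -> S' k = false -> k <= n ->
  (forall l, k < l <= n -> S l = S' l) -> runlen S n = runlen S' n.
Proof.
move=> Sk S'k; elim: n => [//|n IH] k_le eqS.
case: (ltngtP k n.+1) => [k_lt||e]; [|lia|by rewrite /= -e Sk S'k].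
by rewrite /= eqS ?(IH _) //; [move=> l hl; apply: eqS|]; lia.
Qed.

Lemma runlen_stop S n : runlen S n < n -> S (n - runlen S n) = false.
Proof.
elim: n => [//|n IH] /=; case Sn: (S n.+1) => /=; last by rewrite subn0.
by move=> run_lt; rewrite subSS IH //; lia.
Qed.

Lemma runlen_mem (S : nat -> bool) n l : n - runlen S n < l <= n -> S l.
Proof.
elim: n => [|n IH] /=; first lia.
case Sn: (S n.+1) => /= hl; last lia.
by case: (ltngtP l n.+1) => [l_lt||->] //; [apply: IH|]; lia.
Qed.

Lemma runlen_add (S : nat -> bool) a n : a <= n -> (forall l, a < l <= n -> S l) ->
  runlen S n = (n - a) + runlen S a.
Proof.
elim: n => [|n IH] a_le Strue; first by have -> : a = 0 by lia.
case: (ltngtP a n.+1) => [a_lt||<-]; [|lia|by rewrite subnn].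
rewrite /= Strue; last lia.
rewrite IH; [lia | lia | by move=> l hl; apply: Strue; lia].
Qed.

Section SchreierRewriting.
Variable m : nat.
Local Notation "u ≈P v" := (wrel (@Prel m) u v) (at level 70).

Definition bgen p j : option (Bgen m) := insub (p, j).

(* The Schreier generator coset_rep S * tau_(x+1) * (coset_rep (toggle S x.+1))^-1
   in closed form (see coset_rep_step); bgen fails only for x = m, where x+2 lies
   outside every coset. *)
Definition rs_letter S (x : 'I_m.+1) : word (Bgen m) :=
  if S x.+2 then (if bgen (runlen S x) x.+1 is Some b then [:: (b, S x.+1)] else [::])
  else [::].

Fixpoint rs_state S (w : word 'I_m.+1) :=
  if w is a :: w' then rs_state (toggle S a.1.+1) w' else S.

Fixpoint rs_word S (w : word 'I_m.+1) : word (Bgen m) :=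
  if w is a :: w' then rs_letter S a.1 ++ rs_word (toggle S a.1.+1) w' else [::].

Lemma rs_state_cat S u v : rs_state S (u ++ v) = rs_state (rs_state S u) v.
Proof. by elim: u S => //= a u IH S. Qed.

Lemma rs_word_cat S u v : rs_word S (u ++ v) = rs_word S u ++ rs_word (rs_state S u) v.
Proof. by elim: u S => //= a u IH S; rewrite IH catA. Qed.

Lemma bgen_some p j : p < j <= m -> exists b, bgen p j = Some b /\ val b = (p, j).
Proof. by move=> hpj; rewrite /bgen; case: insubP => [b _ vb|]; [exists b | rewrite /= hpj]. Qed.

Lemma bgen_none p j : ~~ (p < j <= m) -> bgen p j = None.
Proof. by move=> hpj; rewrite /bgen; case: insubP => // b; rewrite /= (negbTE hpj). Qed.

Lemma bgen_val p j (b : Bgen m) : val b = (p, j) -> bgen p j = Some b.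
Proof.
move=> vb; have := valP b; rewrite vb /= => /bgen_some[b' [-> vb']].
by congr Some; apply: val_inj; rewrite vb vb'.
Qed.

Lemma Prel_far_commute (b1 b2 : Bgen m) p i q t : val b1 = (p, i) -> val b2 = (q, t) ->
  p < i -> i + 2 <= t <= m -> i + 3 <= t - q -> q < t ->
  [:: (b1, false); (b2, false)] ≈P [:: (b2, false); (b1, false)].
Proof.
move=> vb1 vb2 p_lt ht hq q_lt; apply: wrel_rel; left.
exists i, (i - p), t, (t - i - q); split; first (split; lia).
have -> : i - (i - p) = p by lia.
have -> : t - (i + (t - i - q)) = q by lia.
by rewrite /wval /= vb1 vb2.
Qed.

Lemma Prel_conj (a c d : Bgen m) p i t : val a = (p, i) -> val c = (t - (i - p), t) ->
  val d = (t - (i + 1), t) -> p < i -> i + 2 <= t <= m ->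
  [:: (c, false)] ≈P [:: (a, true); (d, false); (a, false)].
Proof.
move=> va vc vd p_lt ht; apply: wrel_rel; right.
exists i, (i - p), t; split; first (split; lia).
have -> : i - (i - p) = p by lia.
by rewrite /wval /= va vc vd.
Qed.

Lemma Prel_conj_signed (a c d : Bgen m) s :
  [:: (c, false)] ≈P [:: (a, true); (d, false); (a, false)] ->
  [:: (a, true); (d, s)] ≈P [:: (c, s); (a, true)] /\
  [:: (a, false); (c, s)] ≈P [:: (d, s); (a, false)].
Proof.
move=> c_conj; have {}c_conj : [:: (c, s)] ≈P winv [:: (a, false)] ++ [:: (d, s)] ++ [:: (a, false)].
  by case: s; rewrite // -[[:: (c, true)]]/(winv [:: (c, false)]) (wrel_winv c_conj).
by have [] := wrel_conj c_conj.
Qed.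

Lemma eq_rs_letter S S' (x : 'I_m.+1) : S x.+1 = S' x.+1 -> S x.+2 = S' x.+2 ->
  runlen S x = runlen S' x -> rs_letter S x = rs_letter S' x.
Proof. by rewrite /rs_letter => -> -> ->. Qed.

Lemma rs_letter_toggle_cancel S (x : 'I_m.+1) :
  rs_letter S x ++ rs_letter (toggle S x.+1) x ≈P [::].
Proof.
rewrite /rs_letter toggle_neq; last lia.
rewrite toggle_eq (@eq_runlen (toggle S x.+1) S); last first.
  by move=> k hk; rewrite toggle_neq //; lia.
case: (S x.+2) => //; case: (bgen _ _) => [b|] //.
exact: wrel_red.
Qed.

Lemma rs_letter_toggle_far S (x y : 'I_m.+1) : x.+1 < y ->
  rs_letter (toggle S y.+1) x = rs_letter S x.
Proof.
move=> xy; apply: eq_rs_letter; rewrite ?toggle_neq //; try lia.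
by apply: eq_runlen => k hk; rewrite toggle_neq //; lia.
Qed.

Section FarLetters.
Variables (S : nat -> bool) (x y : 'I_m.+1).
Hypotheses (xy : x.+1 < y) (Sx2 : S x.+2).

Let toggle_x_y1 : toggle S x.+1 y.+1 = S y.+1.
Proof. by rewrite toggle_neq //; lia. Qed.
Let toggle_x_y2 : toggle S x.+1 y.+2 = S y.+2.
Proof. by rewrite toggle_neq //; lia. Qed.

(* The two generators commute by the first family of relations. *)
Lemma rs_letter_far_disjoint : runlen S y <= y - x.+2 ->
  rs_letter S x ++ rs_letter (toggle S x.+1) y ≈P rs_letter S y ++ rs_letter S x.
Proof.
move=> run_short.
have S_stop : S (y - runlen S y) = false by apply: runlen_stop; lia.
have stop_neq : y - runlen S y != x.+2 by apply: contraFneq S_stop => ->.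
have -> : rs_letter (toggle S x.+1) y = rs_letter S y.
  apply: eq_rs_letter => //; apply: (@eq_runlen_above _ _ (y - runlen S y)) => //.
  1-3: try move=> ? ?; rewrite ?toggle_neq //; lia.
rewrite [rs_letter S y]/rs_letter.
case Sy2: (S y.+2); last by rewrite cats0.
case: (leqP y.+1 m) => y_lt; last by rewrite bgen_none /= ?cats0 //; lia.
have [b2 [-> vb2]] := @bgen_some (runlen S y) y.+1 ltac:(lia).
have [b1 [bx vb1]] := @bgen_some (runlen S x) x.+1 ltac:(have := runlen_le S x; lia).
rewrite /rs_letter Sx2 bx /=.
apply: wrel_commute_letters; apply: (Prel_far_commute vb1 vb2); have := runlen_le S x; lia.
Qed.

(* The two generators for tau_(y+1), read before and after tau_(x+1), are
   conjugate under beta_p(x+1) by the second family of relations. *)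
Lemma rs_letter_far_overlap : y - x.+2 < runlen S y ->
  rs_letter S x ++ rs_letter (toggle S x.+1) y ≈P rs_letter S y ++ rs_letter S x.
Proof.
move=> run_long.
have S_run l : x.+1 < l <= y -> S l by move=> hl; apply: (runlen_mem (n := y)); lia.
have run_y : runlen S y = (y - x.+1) + runlen S x.+1.
  by apply: runlen_add => [|l hl]; [lia | apply: S_run].
have run_y' : runlen (toggle S x.+1) y = (y - x.+1) + runlen (toggle S x.+1) x.+1.
  by apply: runlen_add => [|l hl]; [lia | rewrite toggle_neq; [apply: S_run|]; lia].
have run_x : runlen (toggle S x.+1) x = runlen S x.
  by apply: eq_runlen => k hk; rewrite toggle_neq //; lia.
rewrite [rs_letter S y]/rs_letter [rs_letter (toggle S x.+1) y]/rs_letter.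
rewrite toggle_x_y1 toggle_x_y2 run_y run_y' /= toggle_eq run_x.
case Sy2: (S y.+2); last by rewrite cats0.
case: (leqP y.+1 m) => y_lt; last by rewrite !bgen_none /= ?cats0 //; lia.
have run_x_le := runlen_le S x.
have [a [ba va]] := @bgen_some (runlen S x) x.+1 ltac:(lia).
have [c [bc vc]] := @bgen_some (y - x.+1 + (runlen S x).+1) y.+1 ltac:(lia).
have [d [bd vd]] := @bgen_some (y - x.+1 + 0) y.+1 ltac:(lia).
have c_conj : [:: (c, false)] ≈P [:: (a, true); (d, false); (a, false)].
  by apply: (Prel_conj va); rewrite ?vc ?vd; do ?congr (_, _); lia.
have [conj1 conj2] := Prel_conj_signed (S y.+1) c_conj.
by rewrite [rs_letter S x]/rs_letter Sx2 ba; case: (S x.+1); rewrite /= ?bc ?bd.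
Qed.

End FarLetters.

Lemma rs_letter_far_commute S (x y : 'I_m.+1) : x.+1 < y ->
  rs_letter S x ++ rs_letter (toggle S x.+1) y ≈P rs_letter S y ++ rs_letter (toggle S y.+1) x.
Proof.
move=> xy; rewrite (rs_letter_toggle_far S xy).
case Sx2: (S x.+2); last first.
  have -> : rs_letter S x = [::] by rewrite /rs_letter Sx2.
  rewrite cats0 (@eq_rs_letter (toggle S x.+1) S) // ?toggle_neq //; try lia.
  by apply: (@eq_runlen_above _ _ x.+2) => // [|l hl]; rewrite ?toggle_neq //; lia.
case: (leqP (runlen S y) (y - x.+2)) => run_y.
  exact: rs_letter_far_disjoint.
exact: rs_letter_far_overlap.
Qed.

End SchreierRewriting.

Section RewritingInvariance.
Variable m : nat.
Local Notation "u ≈ v" := (wrel (@TWrel m) u v) (at level 70).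
Local Notation "u ≈P v" := (wrel (@Prel m) u v) (at level 70).

Lemma rs_wrel (u v : word 'I_m.+1) : u ≈ v ->
  (forall S, rs_word S u ≈P rs_word S v) /\ (forall S, rs_state S u = rs_state S v).
Proof.
elim=> {u v}.
- by [].
- by move=> u v _ [IHw IHs]; split=> S; [symmetry|].
- move=> u v w _ [IHw1 IHs1] _ [IHw2 IHs2]; split=> S; last by rewrite IHs1 IHs2.
  by rewrite IHw1 IHw2.
- move=> l u v r _ [IHw IHs]; split=> S; rewrite ?rs_word_cat ?rs_state_cat ?IHs //.
  by rewrite IHw.
- move=> x b; split=> S /=; last by rewrite toggleK.
  by rewrite cats0 rs_letter_toggle_cancel.
- move=> u v [[i [-> ->]] | [i [j [ij [-> ->]]]]]; split=> S /=.
  + by rewrite cats0 rs_letter_toggle_cancel.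
  + by rewrite toggleK.
  + rewrite !cats0; case: ij => [ij | ji]; first exact: rs_letter_far_commute.
    by symmetry; apply: rs_letter_far_commute.
  + by rewrite toggleC.
Qed.

End RewritingInvariance.

Definition state0 : nat -> bool := fun _ => false.

Definition segment a b : nat -> bool := fun k => a <= k < b.

Lemma segment_nil a : segment a a = state0.
Proof. by apply: functional_extensionality => k; rewrite /segment; apply/negbTE; lia. Qed.

Lemma toggle_segment_end a c : a <= c -> toggle (segment a c) c = segment a c.+1.
Proof.
move=> a_le; apply: functional_extensionality => k; rewrite /toggle /segment.
by case: eqP => [->|] /=; lia.
Qed.

Lemma runlen_segment a c : 0 < a <= c.+1 -> runlen (segment a c.+1) c = c.+1 - a.
Proof.
move=> ha; rewrite (@runlen_add _ a.-1 c); [|lia|by move=> l hl; rewrite /segment; lia].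
case: a ha => [|[|a]] ha /=; [lia | lia |].
by rewrite {1}/segment; case: ifP; lia.
Qed.

Ltac segment_arith := rewrite /toggle /segment; repeat (case: eqP => ? /=); lia.

Section RewritingBeta.
Variable m : nat.
Local Notation taus := (taus m).
Local Notation tauL := (tauL m).

Lemma rs_word_unsign S (w : word 'I_m.+1) : rs_word S (unsign w) = rs_word S w.
Proof. by elim: w S => //= a w IH S; rewrite IH. Qed.

Lemma rs_state_unsign S (w : word 'I_m.+1) : rs_state S (unsign w) = rs_state S w.
Proof. by elim: w S => //= a w IH S; rewrite IH. Qed.

Lemma rs_state_tauL S k w : tau_index m k ->
  rs_state S (tauL k :: w) = rs_state (toggle S k) w.
Proof. by move=> k_idx /=; rewrite val_tauL // prednK //; case/andP: k_idx. Qed.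

Lemma rs_word_tauL S k w : tau_index m k -> rs_word S (tauL k :: w) =
  (if S k.+1 then (if bgen m (runlen S k.-1) k is Some b then [:: (b, S k)] else [::])
   else [::]) ++ rs_word (toggle S k) w.
Proof.
by move=> k_idx /=; rewrite /rs_letter val_tauL // prednK //; case/andP: k_idx.
Qed.

Lemma rs_word_tauL_skip S k w : tau_index m k -> S k.+1 = false ->
  rs_word S (tauL k :: w) = rs_word (toggle S k) w.
Proof. by move=> k_idx Sk1; rewrite rs_word_tauL // Sk1. Qed.

Lemma rs_word_tauL_emit (S : nat -> bool) k w (b : Bgen m) : tau_index m k -> S k.+1 ->
  bgen m (runlen S k.-1) k = Some b -> rs_word S (tauL k :: w) = (b, S k) :: rs_word (toggle S k) w.
Proof. by move=> k_idx Sk1 bk; rewrite rs_word_tauL // Sk1 bk. Qed.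

Lemma rs_taus_up a c n : 0 < a <= c -> c + n <= m.+2 ->
  rs_word (segment a c) (taus (iota c n)) = [::] /\
  rs_state (segment a c) (taus (iota c n)) = segment a (c + n).
Proof.
elim: n c => [|n IH] c hc hn; first by rewrite addn0.
have c_idx : tau_index m c by rewrite /tau_index; lia.
rewrite taus_cons rs_word_tauL_skip ?rs_state_tauL ?toggle_segment_end //; try segment_arith.
by rewrite -addSnnS; apply: IH; lia.
Qed.

Lemma rs_taus_down a n : 0 < a -> a + n <= m.+2 ->
  rs_word (segment a (a + n)) (taus (rev (iota a n))) = [::] /\
  rs_state (segment a (a + n)) (taus (rev (iota a n))) = state0.
Proof.
elim: n => [|n IH] a_gt0 hn; first by rewrite addn0 segment_nil.
have an_idx : tau_index m (a + n) by rewrite /tau_index; lia.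
have -> : rev (iota a n.+1) = a + n :: rev (iota a n) by rewrite -addn1 iotaD rev_cat.
rewrite taus_cons rs_word_tauL_skip ?rs_state_tauL //; last segment_arith.
by rewrite addnS -(@toggle_segment_end a (a + n)) ?toggleK; [apply: IH|]; lia.
Qed.

Lemma rs_word_sandwich p j core w : p < j <= m ->
  rs_word (segment (j - p) j) (taus core) = w ->
  rs_state (segment (j - p) j) (taus core) = segment (j - p) j ->
  rs_word state0 (taus (iota (j - p) p ++ core ++ rev (iota (j - p) p))) = w /\
  rs_state state0 (taus (iota (j - p) p ++ core ++ rev (iota (j - p) p))) = state0.
Proof.
move=> hpj core_w core_s.
have [up_w up_s] := @rs_taus_up (j - p) (j - p) p ltac:(lia) ltac:(lia).
have [down_w down_s] := @rs_taus_down (j - p) p ltac:(lia) ltac:(lia).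
rewrite subnK in up_s down_w down_s; last lia.
rewrite -(segment_nil (j - p)) !taus_cat !rs_word_cat !rs_state_cat.
by rewrite up_w up_s core_w core_s down_w down_s cats0 segment_nil.
Qed.

Section BetaCore.
Variables (b : Bgen m) (p j : nat).
Hypothesis vb : val b = (p, j).
Local Notation S := (segment (j - p) j).

Let hpj : p < j <= m.
Proof. by have := valP b; rewrite vb. Qed.
Let j_idx : tau_index m j. Proof. by rewrite /tau_index; lia. Qed.
Let j1_idx : tau_index m j.+1. Proof. by rewrite /tau_index; lia. Qed.

Let bgen_b S' : (forall k, k < j -> S' k = S k) -> bgen m (runlen S' j.-1) j = Some b.
Proof.
move=> eqS; rewrite (@eq_runlen _ S); last by move=> k hk; apply: eqS; lia.
have run := @runlen_segment (j - p) j.-1; rewrite prednK in run; last lia.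
rewrite run; last lia.
by rewrite (_ : j - (j - p) = p) ?(bgen_val vb); last lia.
Qed.

Let toggle4 (S' : nat -> bool) i k : toggle (toggle (toggle (toggle S' i) k) i) k = S'.
Proof. by rewrite (toggleC (toggle S' i) k i) !toggleK. Qed.

Lemma rs_word_beta_core :
  rs_word S (taus [:: j.+1; j; j.+1; j]) = [:: (b, false)] /\
  rs_state S (taus [:: j.+1; j; j.+1; j]) = S.
Proof.
rewrite !taus_cons !rs_state_tauL // toggle4; split => //.
rewrite rs_word_tauL_skip //; last segment_arith.
rewrite (@rs_word_tauL_emit _ _ _ b) //; [|segment_arith|by apply: bgen_b => k hk; segment_arith].
rewrite rs_word_tauL_skip //; last segment_arith.
rewrite rs_word_tauL_skip //; last segment_arith.
by congr [:: (b, _)]; segment_arith.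
Qed.

Lemma rs_word_beta_core_inv :
  rs_word S (taus [:: j; j.+1; j; j.+1]) = [:: (b, true)] /\
  rs_state S (taus [:: j; j.+1; j; j.+1]) = S.
Proof.
rewrite !taus_cons !rs_state_tauL // toggle4; split => //.
rewrite rs_word_tauL_skip //; last segment_arith.
rewrite rs_word_tauL_skip //; last segment_arith.
rewrite (@rs_word_tauL_emit _ _ _ b) //; [|segment_arith|by apply: bgen_b => k hk; segment_arith].
rewrite rs_word_tauL_skip //; last segment_arith.
by congr [:: (b, _)]; segment_arith.
Qed.

End BetaCore.

Lemma rs_word_phi1 (b : Bgen m) e :
  rs_word state0 (phi [:: (b, e)]) = [:: (b, e)] /\ rs_state state0 (phi [:: (b, e)]) = state0.
Proof.
case vb: (val b) => [p j]; have := valP b; rewrite vb /= => hpj.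
rewrite /phi /= cats0 -[sval b]/(val b) vb /= beta_taus; last lia.
case: e.
- rewrite -rs_word_unsign -rs_state_unsign.
  have -> : unsign (winv (taus (beta_seq p j))) = taus (rev (beta_seq p j)).
    by rewrite /unsign /winv /taus !map_rev -!map_comp.
  rewrite /beta_seq !rev_cat revK -catA.
  by apply: rs_word_sandwich (rs_word_beta_core_inv vb).1 (rs_word_beta_core_inv vb).2.
- exact: rs_word_sandwich (rs_word_beta_core vb).1 (rs_word_beta_core vb).2.
Qed.

Lemma rs_word_phi (u : word (Bgen m)) :
  rs_word state0 (phi u) = u /\ rs_state state0 (phi u) = state0.
Proof.
elim: u => [|[b e] u [IHw IHs]] //.
rewrite -cat1s phi_cat rs_word_cat rs_state_cat.
by have [-> ->] := rs_word_phi1 b e; rewrite IHw IHs.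
Qed.

End RewritingBeta.

Section CosetRepresentatives.
Variable m : nat.
Local Notation "u ≈ v" := (wrel (@TWrel m) u v) (at level 70).
Local Notation taus := (taus m).
Local Notation tauL := (tauL m).
Implicit Types S : nat -> bool.

Definition coset_rep (S : nat -> bool) := taus [seq k <- iota 1 m.+1 | S k].
Definition state_bounded (S : nat -> bool) := forall k, S k -> 0 < k <= m.+1.

Lemma state_bounded_toggle S (x : 'I_m.+1) : state_bounded S -> state_bounded (toggle S x.+1).
Proof.
move=> Sb k; rewrite /toggle; case: eqP => [->|_] /=; last exact: Sb.
by have := ltn_ord x; lia.
Qed.

Lemma coset_rep_state0 : coset_rep state0 = [::].
Proof. by rewrite /coset_rep /state0; elim: (iota 1 m.+1). Qed.

Lemma coset_rep_split S (x : 'I_m.+1) : state_bounded S ->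
  coset_rep S = taus [seq k <- iota 1 x | S k] ++ (if S x.+1 then [:: tauL x.+1] else [::]) ++
    (if S x.+2 then [:: tauL x.+2] else [::]) ++ taus [seq k <- iota x.+3 (m - x).-1 | S k].
Proof.
move=> Sb; have x_lt := ltn_ord x; rewrite /coset_rep.
have -> : iota 1 m.+1 = iota 1 x ++ x.+1 :: iota x.+2 (m - x).
  have {1}-> : m.+1 = x + (m - x).+1 by lia.
  by rewrite iotaD add1n.
rewrite filter_cat taus_cat /=; congr (_ ++ _).
have tail_split : taus [seq k <- iota x.+2 (m - x) | S k] =
    (if S x.+2 then [:: tauL x.+2] else [::]) ++ taus [seq k <- iota x.+3 (m - x).-1 | S k].
  case mx: (m - x) => [|n] /=; last by case: (S x.+2).
  by have -> : S x.+2 = false by apply/negbTE/negP => /Sb; lia.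
by case: (S x.+1); rewrite ?taus_cons tail_split.
Qed.

Lemma filter_iota_runlen S x : [seq k <- iota 1 x | S k] =
  [seq k <- iota 1 (x - runlen S x) | S k] ++ iota (x.+1 - runlen S x) (runlen S x).
Proof.
have run_le := runlen_le S x.
have -> : iota 1 x = iota 1 (x - runlen S x) ++ iota (x.+1 - runlen S x) (runlen S x).
  have {1}-> : x = (x - runlen S x) + runlen S x by lia.
  by rewrite iotaD; congr (_ ++ iota _ _); lia.
rewrite filter_cat; congr (_ ++ _); apply/all_filterP/allP => k.
by rewrite mem_iota => hk; apply: (runlen_mem (n := x)); lia.
Qed.

Lemma filter_iota_runlen_lt S x k :
  k \in [seq k <- iota 1 (x - runlen S x) | S k] -> k < x - runlen S x.
Proof.
rewrite mem_filter mem_iota => /andP [Sk hk].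
case: (ltngtP k (x - runlen S x)) => // [|k_eq]; first lia.
by rewrite k_eq runlen_stop in Sk; lia.
Qed.

Lemma coset_rep_prefix_step S (x : 'I_m.+1) : S x.+2 -> x.+1 <= m ->
  let A := taus [seq k <- iota 1 x | S k] in
  A ++ (if S x.+1 then [:: tauL x.+1] else [::]) ++ [:: tauL x.+2; tauL x.+1] ≈
  phi (rs_letter S x) ++ A ++ (if S x.+1 then [::] else [:: tauL x.+1]) ++ [:: tauL x.+2].
Proof.
move=> Sx2 x_lt A; have run_le := runlen_le S x.
have [g [bg vg]] := @bgen_some m (runlen S x) x.+1 ltac:(lia).
rewrite /rs_letter Sx2 bg /phi /= vg /= cats0 /A filter_iota_runlen.
set p := runlen S x; set A' := [seq k <- iota 1 (x - p) | S k].
have A'_idx : all (tau_index m) A' by rewrite /A'; index_arith.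
have beta_A'_far : all (fun k => all (far k) A') (beta_seq p x.+1).
  apply/allP => k hk; apply/allP => l /filter_iota_runlen_lt.
  by move: hk; rewrite /beta_seq !mem_simpl /far; lia.
have beta_idx : all (tau_index m) (beta_seq p x.+1) by rewrite /beta_seq; index_arith.
rewrite beta_taus; last lia.
case Sx1: (S x.+1) => /=.
- rewrite winv_taus taus_cat -!catA (taus_far_commute (s := rev (beta_seq p x.+1))) ?all_rev //.
  rewrite /beta_seq !rev_cat revK !taus_cat -!catA.
  by rewrite (taus_rev_cancel (iota (x.+1 - p) p)) /= tauL_square.
- rewrite taus_cat -!catA (taus_far_commute (s := beta_seq p x.+1)) //.
  rewrite /beta_seq !taus_cat -!catA.
  by rewrite (taus_rev_cancel (iota (x.+1 - p) p)) /= !tauL_square.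
Qed.

Lemma coset_rep_step S (x : 'I_m.+1) b : state_bounded S ->
  coset_rep S ++ [:: (x, b)] ≈ phi (rs_letter S x) ++ coset_rep (toggle S x.+1).
Proof.
move=> Sb; have x_lt := ltn_ord x.
rewrite (coset_rep_split x Sb) (coset_rep_split x (state_bounded_toggle (x := x) Sb)).
rewrite toggle_eq if_neg toggle_neq; last lia.
have eq_filter a n : x.+1 < a \/ a + n <= x.+1 ->
    [seq k <- iota a n | toggle S x.+1 k] = [seq k <- iota a n | S k].
  by move=> ha; apply: eq_in_filter => k; rewrite mem_iota => hk; rewrite toggle_neq //; lia.
rewrite !eq_filter; [|lia|lia].
set A := taus _; set B := [seq k <- iota x.+3 (m - x).-1 | S k].
have B_idx : all (tau_index m) B by rewrite /B; index_arith.
have B_far : all (far x.+1) B by rewrite /B; index_arith.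
have x_letter : [:: (x, b)] ≈ [:: tauL x.+1].
  by rewrite tw_letter_inv /tauL inord_val.
have x1_idx : tau_index m x.+1 by rewrite /tau_index; lia.
rewrite -!catA x_letter -(@tauL_far_commute m x.+1 B [::]) ?cats0 //.
case Sx2: (S x.+2) => /=.
- have x_lt_m : x.+1 <= m by have := Sb _ Sx2; lia.
  transitivity ((A ++ (if S x.+1 then [:: tauL x.+1] else [::]) ++
                 [:: tauL x.+2; tauL x.+1]) ++ taus B); first by rewrite -!catA.
  by rewrite (coset_rep_prefix_step Sx2 x_lt_m) -!catA.
- rewrite /rs_letter Sx2 /=.
  by case: (S x.+1) => /=; rewrite ?tauL_square.
Qed.

Lemma coset_rep_rs_word S (w : word 'I_m.+1) : state_bounded S ->
  coset_rep S ++ w ≈ phi (rs_word S w) ++ coset_rep (rs_state S w).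
Proof.
elim: w S => [|[x b] w IH] S Sb /=; first by rewrite cats0.
rewrite -cat1s catA coset_rep_step // -catA IH; last exact: state_bounded_toggle.
by rewrite phi_cat catA.
Qed.

End CosetRepresentatives.

Section Commutators.
Variable m : nat.
Local Notation "u ≈ v" := (wrel (@TWrel m) u v) (at level 70).
Local Notation taus := (taus m).

Lemma rs_stateE S (w : word 'I_m.+1) k :
  rs_state S w k = S k (+) odd (count (fun a : 'I_m.+1 * bool => a.1.+1 == k) w).
Proof.
elim: w S => [|a w IH] S /=; first by rewrite addbF.
by rewrite IH /toggle oddD [_ == k]eq_sym; case: (k == a.1.+1); case: (S k); case: (odd _).
Qed.

Lemma rs_state_wcomm S (g h : word 'I_m.+1) : rs_state S (wcomm g h) = S.
Proof.
have count_winv (P : pred ('I_m.+1 * bool)) w :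
    (forall x b, P (x, b) = P (x, ~~ b)) -> count P (winv w) = count P w.
  by move=> Psign; rewrite count_rev count_map; apply: eq_count => -[x b] /=; rewrite -Psign.
apply: functional_extensionality => k; rewrite rs_stateE /wcomm !count_cat !count_winv //.
by rewrite addnA addnC !addnA -addnA addnn odd_double addbF.
Qed.

Lemma rs_state_commutators S (cs : seq (word 'I_m.+1 * word 'I_m.+1)) :
  rs_state S (flatten [seq wcomm c.1 c.2 | c <- cs]) = S.
Proof. by elim: cs S => //= c cs IH S; rewrite rs_state_cat rs_state_wcomm IH. Qed.

Lemma winv_wcomm (g h : word 'I_m.+1) : winv (wcomm g h) = wcomm h g.
Proof. by rewrite /wcomm !winv_cat !winvK -!catA. Qed.

Definition tau_conj p j k := taus (iota (j - p) p ++ k :: rev (iota (j - p) p)).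

Lemma beta_wcomm p j : p <= j -> beta m p j ≈ wcomm (tau_conj p j j.+1) (tau_conj p j j).
Proof.
have winv_tau_conj k : winv (tau_conj p j k) ≈ tau_conj p j k.
  by rewrite winv_taus rev_cat /= rev_cons revK -cats1 -catA.
move=> p_le; rewrite /wcomm !winv_tau_conj beta_taus // /beta_seq /tau_conj.
by rewrite !taus_cat -!catA /= !taus_rev_cancel.
Qed.

Lemma phi_commutator (u : word (Bgen m)) : exists cs,
  phi u ≈ flatten [seq wcomm c.1 c.2 | c <- cs].
Proof.
elim: u => [|[b e] u [cs IH]]; first by exists [::].
case vb: (val b) => [p j]; have := valP b; rewrite vb => /andP[/= p_lt _].
have beta_comm := beta_wcomm (ltnW p_lt).
exists ((if e then (tau_conj p j j, tau_conj p j j.+1)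
         else (tau_conj p j j.+1, tau_conj p j j)) :: cs).
rewrite -cat1s phi_cat IH /phi /= cats0 -[sval b]/(val b) vb /=.
by case: e => /=; rewrite beta_comm ?winv_wcomm.
Qed.

End Commutators.

Lemma phi_wrel_inj m (u v : word (Bgen m)) :
  wrel (@TWrel m) (phi u) (phi v) -> wrel (@Prel m) u v.
Proof.
move=> /rs_wrel[rs_eq _]; have := rs_eq state0.
by have [-> _] := rs_word_phi u; have [-> _] := rs_word_phi v.
Qed.

Lemma in_commTW_phi m (w : word 'I_m.+1) :
  in_commTW w -> exists u : word (Bgen m), wrel (@TWrel m) (phi u) w.
Proof.
move=> [cs /rs_wrel[_ rs_state_eq]]; exists (rs_word state0 w).
have w_state0 : rs_state state0 w = state0 by rewrite rs_state_eq rs_state_commutators.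
have := @coset_rep_rs_word m state0 w (fun k => ltac:(done)).
by rewrite w_state0 coset_rep_state0 cats0 /=; symmetry.
Qed.

Theorem theorem1p1 (m : nat) (hm : 1 <= m) :
  (forall u v : word (Bgen m),
      wrel (@Prel m) u v -> wrel (@TWrel m) (phi u) (phi v)) /\
  (forall u v : word (Bgen m),
      wrel (@TWrel m) (phi u) (phi v) -> wrel (@Prel m) u v) /\
  (forall w : word 'I_m.+1,
      in_commTW w <-> exists u : word (Bgen m), wrel (@TWrel m) (phi u) w).
Proof.
split; first exact: phi_wrel.
split; first exact: phi_wrel_inj.
move=> w; split; first exact: in_commTW_phi.
case=> u phi_u; have [cs phi_cs] := phi_commutator u.
by exists cs; rewrite -phi_u.
Qed.
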